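(* Let $K$ be an algebraically closed field, $m\ge1$ and $2\le a\le b$ integers, $S=K[[x,y_1,\dots,y_m]]$, $g=g(y_1,\dots,y_m)\in(\underline{y})^b\setminus(\underline{y})^{b+1}$, $A=S/(x^a-g)$, $Q=(y_1,\dots,y_m)A$, and $n_k=\lfloor kb/a\rfloor$. Then (a) for all integers $k,n\ge1$, $x^k\in\overline{Q^n}$ if and only if $n\le n_k$; (b) for each $n\ge1$, $Q^n\subseteq J_n\subseteq\overline{Q^n}$, i.e. $\overline{J_n}=\overline{Q^n}$, where $J_n=Q^n+xQ^{n-n_1}+x^2Q^{n-n_2}+\cdots+x^{a-1}Q^{n-n_{a-1}}$.
   Context: $(\underline{y})=(y_1,\dots,y_m)$; $\overline{J}$ denotes the integral closure of an ideal $J$; by convention $Q^j=A$ for $j\le0$. *)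

(* Formal power series ring S = K[[x, y_1, ..., y_m]] given
   concretely as coefficient functions on monomials, with explicit ring
   operations; ideals given by finite generator lists; the quotient
   A = S/(x^a - g) handled through lifts to S. *)
From HB Require Import structures.
From mathcomp Require Import all_boot all_order all_algebra.
Set Implicit Arguments. Unset Strict Implicit. Unset Printing Implicit Defensive.
Import Order.TTheory GRing.Theory Num.Theory.
Local Open Scope ring_scope.

Section PowerSeries.
Variables (K : fieldType) (m : nat).

(* monomials in the m+1 variables x = index ord0, y_j = index (lift ord0 j) *)
Definition mon := {ffun 'I_m.+1 -> nat}.
Definition mdeg (mu : mon) : nat := (\sum_(i < m.+1) mu i)%N.

Definition ser := mon -> K.

Definition zeroS : ser := fun _ => 0.
Definition oneS : ser := fun mu => (mu == [ffun => 0%N])%:R.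
Definition addS (f h : ser) : ser := fun mu => f mu + h mu.
Definition subS (f h : ser) : ser := fun mu => f mu - h mu.
Definition mulS (f h : ser) : ser := fun mu =>
  \sum_(nu : {ffun 'I_m.+1 -> 'I_(mdeg mu).+1} | [forall i, (nu i <= mu i)%N])
     f [ffun i => (nu i : nat)] * h [ffun i => (mu i - nu i)%N].
Definition expS (f : ser) (k : nat) : ser := iter k (mulS f) oneS.
Definition sumS (l : seq ser) : ser := foldr addS zeroS l.

Definition varS (i : 'I_m.+1) : ser :=
  fun mu => (mu == [ffun j => ((j == i) : nat)])%:R.
Definition xS : ser := varS ord0.
Definition ysS : seq ser := [seq varS (lift ord0 j) | j <- enum 'I_m].

Definition inIdeal (gs : seq ser) (f : ser) : Prop :=
  exists cs : seq ser, size cs = size gs /\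
    forall mu, f mu = sumS [seq mulS c.1 c.2 | c <- zip cs gs] mu.

Fixpoint powgens (gs : seq ser) (n : nat) : seq ser :=
  if n is n'.+1 then [seq mulS p q | p <- gs, q <- powgens gs n'] else [:: oneS].

(* Working in A = S/(F): an element of A is represented by a lift in S; the
   ideal of A generated by (the images of) gs contains (the image of) f iff
   f lies in the ideal of S generated by gs and F. *)
Definition inIdealA (F : ser) (gs : seq ser) (f : ser) : Prop :=
  inIdeal (rcons gs F) f.

Definition inIntClA (F : ser) (gs : seq ser) (r : ser) : Prop :=
  exists d : nat, (0 < d)%N /\ exists cs : seq ser, size cs = d /\
    (forall i, (i < d)%N -> inIdealA F (powgens gs i.+1) (nth zeroS cs i)) /\
    inIdealA F [::] (addS (expS r d)
       (sumS [seq mulS (nth zeroS cs i) (expS r (d - i.+1)) | i <- iota 0 d])).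

End PowerSeries.

Arguments xS : clear implicits.
Arguments zeroS : clear implicits.
Arguments oneS : clear implicits.
Arguments ysS : clear implicits.

Definition nk (a b k : nat) : nat := (k * b %/ a)%N.

(* generators of J_n = Q^n + x Q^(n-n_1) + ... + x^(a-1) Q^(n-n_(a-1));
   truncated subtraction implements the convention Q^j = A for j <= 0 *)
Definition Jgens (K : fieldType) (m a b n : nat) : seq (ser K m) :=
  powgens (ysS K m) n ++
  flatten [seq [seq mulS (expS (xS K m) i) q | q <- powgens (ysS K m) (n - nk a b i)]
          | i <- iota 1 a.-1].

(* Give [x] weight [b] and each [y_j] weight [a]. Then [x^a - g] has order [a b], and
   since [g] has a monomial of [y]-degree exactly [b], a lowest-weight term of [x^a - g]
   involves no [x].

   (a) If [n a <= k b] then [x^k] is a root of [T^a - g^k], and [g^k] lies in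
   [Q^(k b)], which is inside [Q^(n a)]. Conversely, an equation of integral dependence
   of degree [d] of [x^k] over [Q^n] with [n a > k b] reads
   [x^(k d) + (terms of weight > k b d) = H (x^a - g)]. The product of the lowest terms
   of [H] and [x^a - g] that come first lexicographically (the [x]-exponent being
   compared first) survives in [H (x^a - g)]; it has weight at most [k b d] and is
   divisible by some [y_j], which no term of the left-hand side of weight [<= k b d] is.

   (b) Modulo [x^a - g], an element [f] of [J_n] is [sum_(i < a) x^i P_i] with [P_i] in
   [Q^(n - n_i)]. Multiplication by [f] on [1, x, ..., x^(a-1)] has a matrix [M] whose
   entry [(l, u)] has [a]-scaled [y]-order at least [a n + (l - u) b]. By Cramer's rule
   [f] is a root of [det (T - M)] modulo [x^a - g], and weighted homogeneity of the
   determinant puts the coefficient of [T^(a-j)] in [(Q^n)^j]. *)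

From HB Require Import structures.
From mathcomp Require Import all_boot all_order all_algebra.
From mathcomp Require Import fingroup perm.
From mathcomp Require Import boolp zify ring.
Set Implicit Arguments. Unset Strict Implicit. Unset Printing Implicit Defensive.
Import Order.TTheory GRing.Theory Num.Theory.
Local Open Scope ring_scope.

(** * Monomials and the power series ring *)

Section Monomials.
Variable m : nat.
Local Notation mon := (mon m).
Implicit Types u v w mu nu : mon.

Definition mon0 : mon := [ffun => 0%N].
Definition mon_add u v : mon := [ffun i => (u i + v i)%N].
Definition mon_sub u v : mon := [ffun i => (u i - v i)%N].
Definition mon_le u v : bool := [forall i, (u i <= v i)%N].

Lemma mon_leP u v : reflect (forall i, u i <= v i)%N (mon_le u v).
Proof. exact: forallP. Qed.

Lemma mon_le_mdeg u i : (u i <= mdeg u)%N.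
Proof. by rewrite /mdeg (bigD1 i) //= leq_addr. Qed.

Lemma mon_addC u v : mon_add u v = mon_add v u.
Proof. by apply/ffunP => i; rewrite !ffunE addnC. Qed.

Lemma mon_subK u v : mon_le v u -> mon_add v (mon_sub u v) = u.
Proof. by move/mon_leP => le_vu; apply/ffunP => i; rewrite !ffunE subnKC. Qed.

Lemma mon_addKl u v : mon_sub (mon_add u v) u = v.
Proof. by apply/ffunP => i; rewrite !ffunE addKn. Qed.

Lemma mon_subKr u v : mon_le v u -> mon_sub u (mon_sub u v) = v.
Proof. by move/mon_leP => le_vu; apply/ffunP => i; rewrite !ffunE subKn. Qed.

Lemma mon_sub0 u : mon_sub u mon0 = u.
Proof. by apply/ffunP => i; rewrite !ffunE subn0. Qed.

Lemma mon_subDA u v w : mon_sub (mon_sub u v) w = mon_sub u (mon_add v w).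
Proof. by apply/ffunP => i; rewrite !ffunE subnDA. Qed.

Lemma mon_le_sub u v : mon_le (mon_sub u v) u.
Proof. by apply/mon_leP => i; rewrite ffunE leq_subr. Qed.

Lemma mon_le_add u v : mon_le u (mon_add u v).
Proof. by apply/mon_leP => i; rewrite ffunE leq_addr. Qed.

Lemma mon_le_trans u v w : mon_le u v -> mon_le v w -> mon_le u w.
Proof.
move=> /mon_leP le_uv /mon_leP le_vw; apply/mon_leP => i.
exact: leq_trans (le_uv i) (le_vw i).
Qed.

Lemma mon_le0 u : mon_le mon0 u.
Proof. by apply/mon_leP => i; rewrite ffunE. Qed.

Definition mon_divisors mu : seq mon :=
  map (fun nu : {ffun 'I_m.+1 -> 'I_(mdeg mu).+1} => [ffun i => nu i : nat] : mon)
    (enum [pred nu : {ffun 'I_m.+1 -> 'I_(mdeg mu).+1} | [forall i, (nu i <= mu i)%N]]).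

Lemma mem_mon_divisors mu nu : (nu \in mon_divisors mu) = mon_le nu mu.
Proof.
apply/mapP/mon_leP => [[nu']|le_nu_mu].
  by rewrite mem_enum inE => /forallP le_nu' -> i; rewrite ffunE.
have nu_lt i : (nu i < (mdeg mu).+1)%N by rewrite ltnS (leq_trans (le_nu_mu i)) ?mon_le_mdeg.
exists [ffun i => Ordinal (nu_lt i)]; last by apply/ffunP => i; rewrite !ffunE.
by rewrite mem_enum inE; apply/forallP => i; rewrite ffunE /= le_nu_mu.
Qed.

Lemma uniq_mon_divisors mu : uniq (mon_divisors mu).
Proof.
rewrite map_inj_uniq ?enum_uniq // => u v /ffunP eq_uv; apply/ffunP => i.
by apply/val_inj; have := eq_uv i; rewrite !ffunE.
Qed.

End Monomials.

Section SeriesRing.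
Variables (K : fieldType) (m : nat).
Local Notation mon := (mon m).
Local Notation ser := (ser K m).
Implicit Types (f h k : ser) (mu nu : mon).

Lemma mulS_divisors f h mu :
  mulS f h mu = \sum_(nu <- mon_divisors mu) f nu * h (mon_sub mu nu).
Proof.
rewrite /mulS /mon_divisors big_map big_enum /=; apply: eq_bigr => nu _.
by congr (_ * h _); apply/ffunP => i; rewrite !ffunE.
Qed.

Lemma big_mon_divisors mu (s : seq mon) (F : mon -> K) : uniq s ->
  (forall nu, (nu \in s) = mon_le nu mu) -> \sum_(nu <- s) F nu = \sum_(nu <- mon_divisors mu) F nu.
Proof.
move=> uniq_s mem_s; apply: perm_big; apply: uniq_perm; rewrite ?uniq_mon_divisors //.
by move=> nu; rewrite mem_s mem_mon_divisors.
Qed.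

Lemma big_mon_divisors_le mu rho (F : mon -> K) : mon_le rho mu ->
  \sum_(nu <- mon_divisors rho) F nu = \sum_(nu <- mon_divisors mu | mon_le nu rho) F nu.
Proof.
move=> le_rho_mu; rewrite -[RHS]big_filter; symmetry; apply: big_mon_divisors.
  by rewrite filter_uniq ?uniq_mon_divisors.
move=> nu; rewrite mem_filter mem_mon_divisors /=.
by apply/andP/idP => [[]//|le_nu]; split=> //; apply: mon_le_trans le_rho_mu.
Qed.

Lemma big_mon_divisors_sub mu nu (F : mon -> K) : mon_le nu mu ->
  \sum_(tau <- mon_divisors (mon_sub mu nu)) F tau
  = \sum_(rho <- mon_divisors mu | mon_le nu rho) F (mon_sub rho nu).
Proof.
move=> le_nu_mu; rewrite -[RHS]big_filter.
rewrite -[RHS](big_map (fun rho => mon_sub rho nu) xpredT); apply: esym; apply: big_mon_divisors.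
  rewrite map_inj_in_uniq ?filter_uniq ?uniq_mon_divisors // => u v.
  rewrite !mem_filter => /andP[le_nu_u _] /andP[le_nu_v _] eq_uv.
  by rewrite -(mon_subK le_nu_u) eq_uv mon_subK.
move=> tau; apply/mapP/mon_leP => [[rho]|le_tau].
  rewrite mem_filter mem_mon_divisors => /andP[/mon_leP le_nu_rho /mon_leP le_rho] -> i.
  by rewrite !ffunE leq_sub2r.
exists (mon_add nu tau); last by rewrite mon_addKl.
rewrite mem_filter mem_mon_divisors mon_le_add /=; apply/mon_leP => i.
by move: (le_tau i) (mon_leP _ _ le_nu_mu i); rewrite !ffunE; lia.
Qed.

Lemma mulSC f h : mulS f h = mulS h f.
Proof.
apply: funext => mu; rewrite !mulS_divisors.
rewrite -(@big_mon_divisors mu [seq mon_sub mu nu | nu <- mon_divisors mu]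
           (fun nu => h nu * f (mon_sub mu nu))); last first.
- move=> nu; apply/mapP/idP => [[nu' _ ->]|le_nu]; first exact: mon_le_sub.
  by exists (mon_sub mu nu); rewrite ?mem_mon_divisors ?mon_le_sub ?mon_subKr.
- rewrite map_inj_in_uniq ?uniq_mon_divisors // => u v.
  rewrite !mem_mon_divisors => le_u le_v eq_uv.
  by rewrite -(mon_subKr le_u) eq_uv mon_subKr.
rewrite [RHS]big_map !big_seq; apply: eq_bigr => nu; rewrite mem_mon_divisors => le_nu.
by rewrite mon_subKr // mulrC.
Qed.

Lemma mulSDr f h k : mulS f (addS h k) = addS (mulS f h) (mulS f k).
Proof.
apply: funext => mu; rewrite /addS !mulS_divisors -big_split.
by apply: eq_bigr => nu _; rewrite mulrDr.
Qed.

Lemma mul1S f : mulS (oneS K m) f = f.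
Proof.
apply: funext => mu; rewrite mulS_divisors (bigD1_seq (mon0 m)) ?uniq_mon_divisors //=; last first.
  by rewrite mem_mon_divisors mon_le0.
rewrite /oneS eqxx mul1r mon_sub0 big1_seq ?addr0 // => nu /andP[nu_neq0 _].
by rewrite /mon0 (negPf nu_neq0) mul0r.
Qed.

Lemma mulSA f h k : mulS f (mulS h k) = mulS (mulS f h) k.
Proof.
pose t mu nu rho := f nu * h (mon_sub rho nu) * k (mon_sub mu rho).
apply: funext => mu; rewrite !mulS_divisors.
transitivity (\sum_(nu <- mon_divisors mu)
               \sum_(rho <- mon_divisors mu | mon_le nu rho) t mu nu rho).
  rewrite !big_seq; apply: eq_bigr => nu; rewrite mem_mon_divisors => le_nu.
  rewrite mulS_divisors mulr_sumr big_mon_divisors_sub //; apply: eq_bigr => rho le_nu_rho.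
  by rewrite mulrA mon_subDA mon_subK.
rewrite (exchange_big_dep xpredT) //=; rewrite !big_seq; apply: eq_bigr => rho.
rewrite mem_mon_divisors => le_rho.
by rewrite mulS_divisors mulr_suml (big_mon_divisors_le _ le_rho).
Qed.

Definition oppS f : ser := fun mu => - f mu.

Lemma addSA : associative (@addS K m).
Proof. by move=> f h k; apply: funext => mu; rewrite /addS addrA. Qed.

Lemma addSC : commutative (@addS K m).
Proof. by move=> f h; apply: funext => mu; rewrite /addS addrC. Qed.

Lemma add0S : left_id (zeroS K m) (@addS K m).
Proof. by move=> f; apply: funext => mu; rewrite /addS /zeroS add0r. Qed.

Lemma addNS : left_inverse (zeroS K m) oppS (@addS K m).
Proof. by move=> f; apply: funext => mu; rewrite /addS /oppS /zeroS addNr. Qed.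

Lemma mulSDl : left_distributive (@mulS K m) (@addS K m).
Proof. by move=> f h k; rewrite mulSC mulSDr !(mulSC k). Qed.

Lemma oneS_neq0 : oneS K m != zeroS K m.
Proof.
apply/eqP => /(congr1 (fun f => f (mon0 m))); rewrite /oneS /zeroS eqxx.
by move/eqP; rewrite oner_eq0.
Qed.

End SeriesRing.

HB.instance Definition _ (K : fieldType) m := Choice.copy (ser K m) (mon m -> K).

HB.instance Definition _ (K : fieldType) m :=
  GRing.isZmodule.Build (ser K m) (@addSA K m) (@addSC K m) (@add0S K m) (@addNS K m).

HB.instance Definition _ (K : fieldType) m :=
  GRing.Zmodule_isComNzRing.Build (ser K m) (@mulSA K m) (@mulSC K m) (@mul1S K m)
    (@mulSDl K m) (@oneS_neq0 K m).

Section SeriesRingTheory.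
Variables (K : fieldType) (m : nat).
Local Notation mon := (mon m).
Local Notation ser := (ser K m).
Implicit Types (f h : ser) (mu nu : mon).

Lemma addSE f h : addS f h = f + h. Proof. by []. Qed.
Lemma subSE f h : subS f h = f - h. Proof. by []. Qed.
Lemma mulSE f h : mulS f h = f * h. Proof. by []. Qed.

Lemma expSE f k : expS f k = f ^+ k.
Proof. by elim: k => [|k IHk] //; rewrite exprS -IHk. Qed.

Lemma sumSE (l : seq ser) : sumS l = \sum_(f <- l) f.
Proof. by elim: l => [|f l IHl]; rewrite ?big_nil // big_cons -IHl. Qed.

Lemma ser_coefD f h mu : (f + h) mu = f mu + h mu. Proof. by []. Qed.
Lemma ser_coefN f mu : (- f) mu = - f mu. Proof. by []. Qed.
Lemma ser_coefB f h mu : (f - h) mu = f mu - h mu. Proof. by []. Qed.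
Lemma ser_coef0 mu : (0 : ser) mu = 0. Proof. by []. Qed.

Lemma ser_coef_sum (I : Type) (r : seq I) (P : pred I) (F : I -> ser) mu :
  (\sum_(i <- r | P i) F i) mu = \sum_(i <- r | P i) F i mu.
Proof. exact: (big_morph (fun f : ser => f mu)). Qed.

Lemma ser_coefM f h mu :
  (f * h) mu = \sum_(nu <- mon_divisors mu) f nu * h (mon_sub mu nu).
Proof. exact: mulS_divisors. Qed.

End SeriesRingTheory.

(** * Monomial series and weighted orders *)

Section MonomialSeries.
Variables (K : fieldType) (m : nat).
Local Notation mon := (mon m).
Local Notation ser := (ser K m).
Implicit Types (f h : ser) (mu nu : mon).

Definition monoS nu : ser := fun mu => (mu == nu)%:R.
Definition mon_unit (i : 'I_m.+1) : mon := [ffun j => (j == i) : nat].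
Definition mon_scale (j : nat) nu : mon := [ffun i => (j * nu i)%N].

Lemma varSE i : varS K i = monoS (mon_unit i). Proof. by []. Qed.

Lemma coef_monoSM nu f mu :
  (monoS nu * f) mu = if mon_le nu mu then f (mon_sub mu nu) else 0.
Proof.
rewrite ser_coefM; case: ifP => le_nu.
  rewrite (bigD1_seq nu) ?mem_mon_divisors ?uniq_mon_divisors //= /monoS eqxx mul1r.
  by rewrite big1 ?addr0 // => nu' /negPf ->; rewrite mul0r.
rewrite big1_seq // => nu'; rewrite mem_mon_divisors /monoS.
by case: eqP => [->|_]; rewrite ?le_nu // mul0r.
Qed.

Lemma monoSM u v : monoS u * monoS v = monoS (mon_add u v).
Proof.
apply: funext => mu; rewrite coef_monoSM /monoS; case: ifP => [le_u|].
  suff -> : (mon_sub mu u == v) = (mu == mon_add u v) by [].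
  by apply/eqP/eqP => [<-|->]; rewrite ?mon_subK ?mon_addKl.
by case: eqP => // ->; rewrite mon_le_add.
Qed.

Lemma monoSX u j : monoS u ^+ j = monoS (mon_scale j u).
Proof.
elim: j => [|j IHj]; first by congr monoS; apply/ffunP => i; rewrite !ffunE.
by rewrite exprS IHj monoSM; congr monoS; apply/ffunP => i; rewrite !ffunE mulSn.
Qed.

Definition order_ge (delta : mon -> nat) (N : int) f :=
  forall mu, f mu != 0 -> N <= (delta mu)%:Z.

Section Order.
Variable delta : mon -> nat.
Hypothesis deltaD : {morph delta : u v / mon_add u v >-> (u + v)%N}.

Lemma order_ge0 N : order_ge delta N 0.
Proof. by move=> mu; rewrite ser_coef0 eqxx. Qed.

Lemma order_geD N f h : order_ge delta N f -> order_ge delta N h -> order_ge delta N (f + h).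
Proof.
move=> ord_f ord_h mu; rewrite ser_coefD.
by have [->|/ord_f //] := eqVneq (f mu) 0; rewrite add0r; apply: ord_h.
Qed.

Lemma order_geN N f : order_ge delta N f -> order_ge delta N (- f).
Proof. by move=> ord_f mu; rewrite ser_coefN oppr_eq0; apply: ord_f. Qed.

Lemma order_ge_sum (I : Type) (r : seq I) (P : pred I) (F : I -> ser) N :
  (forall i, P i -> order_ge delta N (F i)) -> order_ge delta N (\sum_(i <- r | P i) F i).
Proof.
move=> ord_F; elim/big_rec: _ => [|i f Pi ord_f]; first exact: order_ge0.
exact: order_geD (ord_F _ Pi) ord_f.
Qed.

Lemma order_geW N N' f : N' <= N -> order_ge delta N f -> order_ge delta N' f.
Proof. by move=> le_N ord_f mu /ord_f; apply: le_trans. Qed.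

Lemma order_ge_nonpos N f : N <= 0 -> order_ge delta N f.
Proof. by move=> N_le0 mu _; apply: le_trans N_le0 _. Qed.

Lemma order_geM N1 N2 f h :
  order_ge delta N1 f -> order_ge delta N2 h -> order_ge delta (N1 + N2) (f * h).
Proof.
move=> ord_f ord_h mu; rewrite ser_coefM => fh_mu.
have /hasP[nu] : has (fun nu => f nu * h (mon_sub mu nu) != 0) (mon_divisors mu).
  apply: contraNT fh_mu => /hasPn fh0; rewrite big1_seq // => nu /fh0.
  by rewrite negbK => /eqP.
rewrite mem_mon_divisors => /mon_subK mu_eq.
rewrite mulf_eq0 negb_or => /andP[/ord_f le_f /ord_h le_h].
by rewrite -mu_eq deltaD PoszD lerD.
Qed.

Lemma order_ge_monoS nu : order_ge delta (delta nu) (monoS nu).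
Proof. by move=> mu; rewrite /monoS; case: (mu =P nu) => [->|_] //; rewrite eqxx. Qed.

Lemma order_geX N f j : order_ge delta N f -> order_ge delta (N * j%:Z) (f ^+ j).
Proof.
move=> ord_f; elim: j => [|j IHj]; first by rewrite mulr0; apply: order_ge_nonpos.
by rewrite exprS -addn1 PoszD mulrDr mulr1 addrC; apply: order_geM.
Qed.

End Order.

End MonomialSeries.

Section Ideals.
Variables (K : fieldType) (m : nat).
Local Notation mon := (mon m).
Local Notation ser := (ser K m).
Implicit Types (f h p q : ser) (gs G : seq ser).

Lemma inIdeal_nil f : inIdeal [::] f <-> f = 0.
Proof.
split => [[cs [/size0nil -> cs_f]]|->]; first by apply: funext => mu; rewrite cs_f.
by exists [::].
Qed.

Lemma inIdeal_cons p gs f :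
  inIdeal (p :: gs) f <-> exists c h, inIdeal gs h /\ f = c * p + h.
Proof.
split => [[[|c cs] [//= [size_cs cs_f]]]|[c [h [[cs [size_cs cs_h]] ->]]]].
  exists c, (sumS [seq mulS c.1 c.2 | c <- zip cs gs]); split; first by exists cs.
  by apply: funext => mu; rewrite cs_f.
by exists (c :: cs); split=> [|mu]; rewrite /= ?size_cs // /addS -cs_h.
Qed.

Lemma inIdeal_ind gs (P : ser -> Prop) :
  P 0 -> (forall f h, P f -> P h -> P (f + h)) -> (forall h f, P f -> P (h * f)) ->
  (forall q, q \in gs -> P q) -> forall f, inIdeal gs f -> P f.
Proof.
move=> P0 PD PM; elim: gs => [|p gs IHgs] Pgs f; first by move/inIdeal_nil ->.
case/inIdeal_cons => c [h [gs_h ->]]; apply: PD; first by apply/PM/Pgs; rewrite mem_head.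
by apply: IHgs gs_h => q gs_q; apply: Pgs; rewrite in_cons gs_q orbT.
Qed.

Lemma inIdeal0 gs : inIdeal gs 0.
Proof.
elim: gs => [|p gs IHgs]; first exact/inIdeal_nil.
by apply/inIdeal_cons; exists 0, 0; rewrite mul0r addr0.
Qed.

Lemma inIdealD gs f h : inIdeal gs f -> inIdeal gs h -> inIdeal gs (f + h).
Proof.
elim: gs f h => [|p gs IHgs] f h.
  by move=> /inIdeal_nil -> /inIdeal_nil ->; apply/inIdeal_nil; rewrite addr0.
move=> /inIdeal_cons[c1 [h1 [gs_h1 ->]]] /inIdeal_cons[c2 [h2 [gs_h2 ->]]].
apply/inIdeal_cons; exists (c1 + c2), (h1 + h2); split; first exact: IHgs.
by rewrite mulrDl addrACA.
Qed.

Lemma inIdealM gs h f : inIdeal gs f -> inIdeal gs (h * f).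
Proof.
elim: gs f => [|p gs IHgs] f.
  by move=> /inIdeal_nil ->; apply/inIdeal_nil; rewrite mulr0.
move=> /inIdeal_cons[c [h' [gs_h' ->]]]; apply/inIdeal_cons.
by exists (h * c), (h * h'); split; [exact: IHgs | rewrite mulrDr mulrA].
Qed.

Lemma inIdeal_mem gs q : q \in gs -> inIdeal gs q.
Proof.
elim: gs => [//|p gs IHgs]; rewrite in_cons => /predU1P[->|gs_q]; apply/inIdeal_cons.
  by exists 1, 0; split; [exact: inIdeal0 | rewrite mul1r addr0].
by exists 0, q; split; [exact: IHgs | rewrite mul0r add0r].
Qed.

Lemma inIdeal_trans gs1 gs2 f :
  (forall q, q \in gs1 -> inIdeal gs2 q) -> inIdeal gs1 f -> inIdeal gs2 f.
Proof.
by move=> gs12; apply: inIdeal_ind => //; [exact: inIdeal0 | exact: inIdealD | exact: inIdealM].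
Qed.

Lemma inIdeal_cat gs1 gs2 f : inIdeal (gs1 ++ gs2) f ->
  exists u v, [/\ inIdeal gs1 u, inIdeal gs2 v & f = u + v].
Proof.
apply: (@inIdeal_ind _ (fun f => exists u v, [/\ inIdeal gs1 u, inIdeal gs2 v & f = u + v]))
  => [|f1 f2|h f1|q].
- by exists 0, 0; rewrite addr0; split=> //; apply: inIdeal0.
- move=> [u1 [v1 [gs_u1 gs_v1 ->]]] [u2 [v2 [gs_u2 gs_v2 ->]]].
  by exists (u1 + u2), (v1 + v2); rewrite addrACA; split=> //; apply: inIdealD.
- move=> [u [v [gs_u gs_v ->]]].
  by exists (h * u), (h * v); rewrite mulrDr; split=> //; apply: inIdealM.
rewrite mem_cat => /orP[gs_q|gs_q].
  by exists q, 0; rewrite addr0; split=> //; [exact: inIdeal_mem | exact: inIdeal0].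
by exists 0, q; rewrite add0r; split=> //; [exact: inIdeal0 | exact: inIdeal_mem].
Qed.

Lemma inIdealAP F gs f : inIdealA F gs f <-> exists u h, inIdeal gs u /\ f = u + h * F.
Proof.
rewrite /inIdealA -cats1; split => [/inIdeal_cat[u [v [gs_u /inIdeal_cons FF ->]]]|].
  by case: FF => [c [h [/inIdeal_nil -> ->]]]; exists u, c; rewrite addr0.
case=> u [h [gs_u ->]]; apply: inIdealD.
  by apply: inIdeal_trans gs_u => q gs_q; apply: inIdeal_mem; rewrite mem_cat gs_q.
by apply/inIdealM/inIdeal_mem; rewrite mem_cat mem_head orbT.
Qed.

Lemma inIdealA_ideal F gs u : inIdeal gs u -> inIdealA F gs u.
Proof. by move=> gs_u; apply/inIdealAP; exists u, 0; rewrite mul0r addr0. Qed.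

Lemma mem_powgensS G j p q :
  p \in G -> q \in powgens G j -> p * q \in powgens G j.+1.
Proof. by move=> Gp Gq; apply: allpairs_f. Qed.

Lemma powgensSP G j z :
  z \in powgens G j.+1 -> exists p q, [/\ p \in G, q \in powgens G j & z = p * q].
Proof. by case/allpairsP => [[p q] [/= Gp Gq ->]]; exists p, q. Qed.

Lemma inIdeal_powgensS G j p f :
  p \in G -> inIdeal (powgens G j) f -> inIdeal (powgens G j.+1) (p * f).
Proof.
move=> Gp; apply: (@inIdeal_ind _ (fun f => inIdeal (powgens G j.+1) (p * f)))
  => [|f1 f2|h f1|q Gq]; first by rewrite mulr0; apply: inIdeal0.
- by rewrite mulrDr; apply: inIdealD.
- by rewrite mulrCA; apply: inIdealM.
by apply/inIdeal_mem/mem_powgensS.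
Qed.

Section IdealOrder.
Variable delta : mon -> nat.
Hypothesis deltaD : {morph delta : u v / mon_add u v >-> (u + v)%N}.

Lemma order_ge_powgens G (N : int) j : (forall p, p \in G -> order_ge delta N p) ->
  forall q, q \in powgens G j -> order_ge delta (N * j%:Z) q.
Proof.
move=> ord_G; elim: j => [|j IHj] q; first by rewrite mulr0 => _; apply: order_ge_nonpos.
case/powgensSP => [p [r [Gp Gr ->]]].
by rewrite -addn1 PoszD mulrDr mulr1 addrC; apply: order_geM => //; [apply: ord_G | apply: IHj].
Qed.

Lemma inIdeal_order_ge gs (N : int) f : (forall q, q \in gs -> order_ge delta N q) ->
  inIdeal gs f -> order_ge delta N f.
Proof.
move=> ord_gs; apply: inIdeal_ind => //; [exact: order_ge0 | exact: order_geD |].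
by move=> h f1 ord_f1; rewrite -[N]add0r; apply: order_geM => //; apply: order_ge_nonpos.
Qed.

End IdealOrder.

End Ideals.

(** * The [y]-adic filtration *)

Definition ydeg m (mu : mon m) : nat := (\sum_(i < m.+1 | i != ord0) mu i)%N.
Arguments ydeg {m} mu.

Section YOrder.
Variables (K : fieldType) (m : nat).
Local Notation mon := (mon m).
Local Notation ser := (ser K m).
Local Notation Q n := (powgens (ysS K m) n).
Implicit Types (f h q : ser) (mu nu : mon).

Lemma ydegD : {morph @ydeg m : u v / mon_add u v >-> (u + v)%N}.
Proof. by move=> u v; rewrite /ydeg -big_split /=; apply: eq_bigr => i _; rewrite ffunE. Qed.

Lemma ydeg_unit (j : 'I_m) : ydeg (mon_unit (lift ord0 j)) = 1%N.
Proof.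
rewrite /ydeg (bigD1 (lift ord0 j)) ?neq_lift //= ffunE eqxx big1 // => i /andP[_ /negPf].
by rewrite ffunE => ->.
Qed.

Lemma mon_le_unit (i : 'I_m.+1) mu : mon_le (mon_unit i) mu = (0 < mu i)%N.
Proof.
apply/mon_leP/idP => [/(_ i)|mu_i k]; first by rewrite ffunE eqxx.
by rewrite ffunE; case: eqP => [->|].
Qed.

Lemma ydeg_gt0 mu : (0 < ydeg mu)%N -> exists j, (0 < mu (lift ord0 j))%N.
Proof.
move=> ydeg_mu; apply/existsP; apply: contraTT ydeg_mu => /existsPn mu_y0.
rewrite -leqNgt leqn0 /ydeg; apply/eqP/big1 => i i_neq0.
have [j ->|i0] := unliftP ord0 i; last by rewrite i0 eqxx in i_neq0.
by apply/eqP; rewrite -leqn0 leqNgt mu_y0.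
Qed.

Lemma order_ge_Q n q : q \in Q n -> order_ge ydeg n q.
Proof.
rewrite -[n%:Z]mul1r; apply: (order_ge_powgens ydegD) => _ /mapP[j _ ->].
by rewrite varSE; have := @order_ge_monoS K m ydeg (mon_unit (lift ord0 j)); rewrite ydeg_unit.
Qed.

Lemma inQ_order_ge n f : inIdeal (Q n) f -> order_ge ydeg n f.
Proof. by apply: (inIdeal_order_ge ydegD) => q; apply: order_ge_Q. Qed.

Lemma inQpow_order_ge n j f : inIdeal (powgens (Q n) j) f -> order_ge ydeg (n * j)%N f.
Proof.
apply: (inIdeal_order_ge ydegD) => q; rewrite PoszM.
by apply: (order_ge_powgens ydegD) => p; apply: order_ge_Q.
Qed.

Definition no_y_before (j : 'I_m) mu := [forall i : 'I_m, (i < j)%N ==> (mu (lift ord0 i) == 0%N)].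

(* [f = sum_j y_j * ycofactor f j], each monomial going to its first [y]-variable. *)
Definition ycofactor f (j : 'I_m) : ser := fun mu =>
  if no_y_before j mu then f (mon_add mu (mon_unit (lift ord0 j))) else 0.

Lemma first_y_unique (c : K) mu : (0 < ydeg mu)%N ->
  \sum_(j < m) (if (0 < mu (lift ord0 j))%N && no_y_before j mu then c else 0) = c.
Proof.
move=> /ydeg_gt0[j0 mu_j0].
have [j1 mu_j1 j1_min] := @arg_minnP _ j0 (fun j => 0 < mu (lift ord0 j))%N val mu_j0.
rewrite (bigD1 j1) //= mu_j1 big1 ?addr0.
  suff -> : no_y_before j1 mu by [].
  apply/forallP => i; apply/implyP => lt_i_j1; rewrite -leqn0 leqNgt.
  by apply: contraTN lt_i_j1 => /j1_min; rewrite -leqNgt.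
move=> j j_neq_j1; case: ifP => // /andP[mu_j /forallP no_y]; exfalso.
have [lt_j_j1|lt_j1_j|/val_inj eq_j] := ltngtP j j1; last by rewrite eq_j eqxx in j_neq_j1.
  by have := j1_min _ mu_j; rewrite leqNgt lt_j_j1.
by move: mu_j1; rewrite (eqP (implyP (no_y j1) lt_j1_j)).
Qed.

Lemma ycofactor_coef f (j : 'I_m) mu : (0 < mu (lift ord0 j))%N ->
  ycofactor f j (mon_sub mu (mon_unit (lift ord0 j))) = if no_y_before j mu then f mu else 0.
Proof.
move=> mu_j; rewrite /ycofactor mon_addC mon_subK ?mon_le_unit //.
suff -> : no_y_before j (mon_sub mu (mon_unit (lift ord0 j))) = no_y_before j mu by [].
apply: eq_forallb => i; case: (ltnP i j) => //= lt_ij.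
rewrite !ffunE (inj_eq (@lift_inj _ ord0)).
by rewrite (negPf (_ : i != j)) ?subn0 // neq_ltn lt_ij.
Qed.

Lemma ycofactor_sum (N : nat) f : order_ge ydeg N.+1 f ->
  f = \sum_(j < m) varS K (lift ord0 j) * ycofactor f j.
Proof.
move=> ord_f; apply: funext => mu; rewrite ser_coef_sum.
transitivity (\sum_(j < m) (if (0 < mu (lift ord0 j))%N && no_y_before j mu then f mu else 0)).
  have [ydeg0|ydeg_gt0] := posnP (ydeg mu); last by rewrite first_y_unique.
  rewrite big1 => [|j _]; last first.
    move: ydeg0; rewrite /ydeg (bigD1 (lift ord0 j)) ?neq_lift //=.
    by move/eqP; rewrite addn_eq0 => /andP[/eqP->].
  apply/eqP; apply: contraT => /ord_f; rewrite ydeg0.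
  by rewrite lez_nat.
apply: eq_bigr => j _; rewrite varSE coef_monoSM mon_le_unit.
by case: (ltnP 0 (mu (lift ord0 j))) => //= mu_j; rewrite ycofactor_coef.
Qed.

Lemma order_ge_ycofactor (N : nat) f j :
  order_ge ydeg N.+1 f -> order_ge ydeg N (ycofactor f j).
Proof.
move=> ord_f mu; rewrite /ycofactor; case: ifP => [_ /ord_f|]; last by rewrite eqxx.
by rewrite ydegD ydeg_unit addn1.
Qed.

Inductive combination (L : seq ser) (P : ser -> Prop) : ser -> Prop :=
| combination0 : combination L P 0
| combinationS l q h : l \in L -> P q -> combination L P h -> combination L P (l * q + h).

Lemma combinationD L P f h :
  combination L P f -> combination L P h -> combination L P (f + h).
Proof.
elim=> [|l q h' Ll Pq _ IH] comb_h; first by rewrite add0r.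
by rewrite -addrA; apply: combinationS => //; apply: IH.
Qed.

Lemma combination_mull L L' P p f : (forall l, l \in L -> p * l \in L') ->
  combination L P f -> combination L' P (p * f).
Proof.
move=> pL; elim=> [|l q h Ll Pq _ IH]; first by rewrite mulr0; apply: combination0.
by rewrite mulrDr mulrA; apply: combinationS => //; apply: pL.
Qed.

Lemma combination_order_ge (N M : nat) f :
  order_ge ydeg (N + M)%N f -> combination (Q N) (order_ge ydeg M) f.
Proof.
elim: N f => [|N IHN] f ord_f.
  rewrite -[f]addr0 -[f]mul1r; apply: combinationS; rewrite ?mem_head //.
  exact: combination0.
rewrite addSn in ord_f; rewrite (ycofactor_sum ord_f).
apply: (big_ind (combination _ _)) => [|f1 f2|j _]; [exact: combination0 | exact: combinationD |].
apply: (combination_mull (L := Q N)); last exact/IHN/order_ge_ycofactor.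
by move=> l QNl; apply: mem_powgensS QNl; apply/map_f; rewrite mem_enum.
Qed.

Lemma order_ge_inQ (N : nat) f : order_ge ydeg N f -> inIdeal (Q N) f.
Proof.
move=> ord_f; have /combination_order_ge : order_ge ydeg (N + 0)%N f by rewrite addn0.
elim=> [|l q h QNl _ _ IH]; first exact: inIdeal0.
by apply: inIdealD IH; rewrite mulrC; apply/inIdealM/inIdeal_mem.
Qed.

Lemma order_ge_inQpow n j f : order_ge ydeg (n * j)%N f -> inIdeal (powgens (Q n) j) f.
Proof.
elim: j f => [|j IHj] f.
  by move=> _; rewrite -[f]mulr1; apply/inIdealM/inIdeal_mem; rewrite mem_head.
rewrite mulnS => /combination_order_ge.
elim=> [|l q h QNl ord_q _ IH]; first exact: inIdeal0.
by apply: inIdealD IH; apply/inIdeal_powgensS/IHj.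
Qed.

End YOrder.

Arguments ydegD {m}.

(** * Lowest-weight terms *)

Lemma ex_minn_prop (P : nat -> Prop) :
  (exists n, P n) -> exists2 n, P n & forall k, P k -> (n <= k)%N.
Proof.
case=> n Pn; have /ex_minnP[k /asboolP Pk k_min] : exists n, `[< P n >] by exists n; apply/asboolP.
by exists k => // j /asboolP/k_min.
Qed.

Section Lex.
Variable m : nat.
Local Notation mon := (mon m).
Implicit Types u v : mon.

Fixpoint mon_lex (s : seq 'I_m.+1) u v : bool :=
  if s is i :: s' then (u i < v i)%N || (u i == v i) && mon_lex s' u v else true.

Lemma mon_lex_head i s u v : mon_lex (i :: s) u v -> (u i <= v i)%N.
Proof. by case/orP => [/ltnW //|/andP[/eqP-> _]]. Qed.

Lemma ex_mon_lex_min s (P : mon -> Prop) :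
  (exists nu, P nu) -> exists2 lam, P lam & forall nu, P nu -> mon_lex s lam nu.
Proof.
elim: s P => [|i s IHs] P [nu0 P_nu0]; first by exists nu0.
have [n [nu1 [P_nu1 nu1_i]] n_min] : exists2 n, exists nu, P nu /\ nu i = n &
    forall k, (exists nu, P nu /\ nu i = k) -> (n <= k)%N.
  by apply: ex_minn_prop; exists (nu0 i), nu0.
have [lam [P_lam lam_i] lam_min] : exists2 lam, P lam /\ lam i = n &
    forall nu, P nu /\ nu i = n -> mon_lex s lam nu.
  by apply: IHs; exists nu1.
exists lam => // nu P_nu /=; rewrite lam_i.
have := n_min (nu i) (ex_intro _ nu (conj P_nu erefl)); rewrite leq_eqVlt => /predU1P[nu_i|->//].
by rewrite nu_i eqxx lam_min ?orbT //; split.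
Qed.

Lemma mon_lex_add_eq s u v u' v' : mon_lex s u u' -> mon_lex s v v' ->
  mon_add u v = mon_add u' v' -> {in s, u =1 u'}.
Proof.
move=> lex_u lex_v eq_add; have eq_i i : (u i + v i = u' i + v' i)%N.
  by have := congr1 (fun w : mon => w i) eq_add; rewrite !ffunE.
elim: s lex_u lex_v => [//|i s IHs] /= lex_u lex_v j.
have u_i : u i = u' i.
  case/orP: lex_u => [lt_u|/andP[/eqP //]].
  by have := mon_lex_head lex_v; have := eq_i i; lia.
have v_i : v i = v' i by have := eq_i i; rewrite u_i => /addnI.
move: lex_u lex_v; rewrite u_i v_i !ltnn !eqxx /= => lex_u lex_v.
by rewrite in_cons => /predU1P[->|]; [|apply: IHs].
Qed.

End Lex.

Section LeadingTerm.
Variables (K : fieldType) (m : nat) (delta : mon m -> nat) (s : seq 'I_m.+1).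
Hypothesis deltaD : {morph delta : u v / mon_add u v >-> (u + v)%N}.
Hypothesis s_full : forall i, i \in s.
Local Notation mon := (mon m).
Local Notation ser := (ser K m).
Implicit Types (f h : ser) (mu nu : mon).

Definition lex_lead f lam := [/\ f lam != 0, order_ge delta (delta lam) f &
  forall nu, delta nu = delta lam -> f nu != 0 -> mon_lex s lam nu].

Lemma ex_lex_lead f : (exists mu, f mu != 0) -> exists lam, lex_lead f lam.
Proof.
move=> [mu f_mu].
have [w [nu [nu_w f_nu]] w_min] : exists2 w, exists nu, delta nu = w /\ f nu != 0 &
    forall k, (exists nu, delta nu = k /\ f nu != 0) -> (w <= k)%N.
  by apply: ex_minn_prop; exists (delta mu), mu.
have [lam [lam_w f_lam] lam_min] : exists2 lam, delta lam = w /\ f lam != 0 &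
    forall nu, delta nu = w /\ f nu != 0 -> mon_lex s lam nu.
  by apply: ex_mon_lex_min; exists nu.
exists lam; split=> // [mu' f_mu'|nu' nu'_w f_nu']; last by apply: lam_min; rewrite lam_w in nu'_w.
by rewrite lam_w lez_nat; apply: w_min; exists mu'.
Qed.

Lemma coef_mul_lex_lead f h lam rho : lex_lead f lam -> lex_lead h rho ->
  (f * h) (mon_add lam rho) = f lam * h rho.
Proof.
move=> [f_lam ord_f lam_min] [h_rho ord_h rho_min].
rewrite ser_coefM (bigD1_seq lam) ?mem_mon_divisors ?mon_le_add ?uniq_mon_divisors //=.
rewrite mon_addKl big1_seq ?addr0 // => nu /andP[nu_neq le_nu]; apply/eqP.
apply: contraNT nu_neq; rewrite mulf_eq0 negb_or => /andP[f_nu h_nu].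
move: le_nu; rewrite mem_mon_divisors => /mon_subK eq_add.
have := ord_f _ f_nu; have := ord_h _ h_nu; have := congr1 delta eq_add.
rewrite !deltaD !lez_nat => eq_w le_h le_f.
have nu_w : delta nu = delta lam by lia.
have nu'_w : delta (mon_sub (mon_add lam rho) nu) = delta rho by lia.
have := mon_lex_add_eq (lam_min _ nu_w f_nu) (rho_min _ nu'_w h_nu) (esym eq_add).
by move=> eq_lam; apply/eqP/ffunP => i; rewrite eq_lam.
Qed.

Lemma mul_lex_lead h F rho : (exists mu, h mu != 0) -> lex_lead F rho ->
  exists lam, (h * F) (mon_add lam rho) != 0 /\
              order_ge delta (delta (mon_add lam rho)) (h * F).
Proof.
move=> /ex_lex_lead[lam lead_h] lead_F; exists lam.
have [[h_lam ord_h _] [F_rho ord_F _]] := (lead_h, lead_F).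
rewrite coef_mul_lex_lead // mulf_neq0 //; split=> //.
by rewrite deltaD PoszD; apply: order_geM.
Qed.

End LeadingTerm.

(** * Integral dependence of powers of [x] *)

Section IntegralClosure.
Variables (K : fieldType) (m : nat).
Local Notation ser := (ser K m).

Lemma inIntClAP (F : ser) gs r : inIntClA F gs r <->
  exists d (cs : seq ser) h, [/\ (0 < d)%N, size cs = d,
    forall i, (i < d)%N -> inIdealA F (powgens gs i.+1) cs`_i &
    r ^+ d + \sum_(0 <= i < d) cs`_i * r ^+ (d - i.+1) = h * F].
Proof.
have sumE d (cs : seq ser) :
    sumS [seq mulS (nth (zeroS K m) cs i) (expS r (d - i.+1)) | i <- iota 0 d]
    = \sum_(0 <= i < d) cs`_i * r ^+ (d - i.+1).
  by rewrite sumSE big_map /index_iota subn0; apply: eq_bigr => i _; rewrite expSE.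
split=> [[d [d_gt0 [cs [size_cs [cs_Q /inIdealAP[u [h [/inIdeal_nil u0 eq_r]]]]]]]]|].
  exists d, cs, h; split=> //.
  by rewrite -sumE -expSE -addSE eq_r u0 add0r.
case=> d [cs [h [d_gt0 size_cs cs_Q eq_r]]].
exists d; split=> //; exists cs; split=> //; split=> //.
apply/inIdealAP; exists 0, h; split; first exact: inIdeal0.
by rewrite add0r addSE expSE sumE.
Qed.

End IntegralClosure.

Definition wt (a b : nat) m (mu : mon m) : nat := (b * mu ord0 + a * ydeg mu)%N.
Arguments wt a b {m} mu.

Section PartA.
Variables (K : fieldType) (m a b : nat) (g : ser K m).
Hypothesis a_gt0 : (0 < a)%N.
Hypothesis g_noX : forall mu : mon m, (0 < mu ord0)%N -> g mu = 0.
Hypothesis g_Qb : inIdeal (powgens (ysS K m) b) g.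
Local Notation mon := (mon m).
Local Notation ser := (ser K m).
Local Notation x := (xS K m).
Local Notation Q n := (powgens (ysS K m) n).
Implicit Types (f h : ser) (mu nu : mon).

Definition Fxg : ser := x ^+ a - g.

Lemma wtD : {morph @wt a b m : u v / mon_add u v >-> (u + v)%N}.
Proof. by move=> u v; rewrite /wt ydegD ffunE; lia. Qed.

Definition xmon (j : nat) : mon := mon_scale j (mon_unit ord0).

Lemma xmon_ord0 j : xmon j ord0 = j.
Proof. by rewrite !ffunE eqxx muln1. Qed.

Lemma ydeg_xmon j : ydeg (xmon j) = 0%N.
Proof. by rewrite /ydeg big1 // => i /negPf i_neq0; rewrite !ffunE i_neq0 muln0. Qed.

Lemma wt_xmon j : wt a b (xmon j) = (b * j)%N.
Proof. by rewrite /wt xmon_ord0 ydeg_xmon muln0 addn0. Qed.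

Lemma xpowE j : x ^+ j = monoS K (xmon j).
Proof. by rewrite /xS varSE monoSX. Qed.

Lemma order_ge_xpow j : order_ge (wt a b) (b * j)%N (x ^+ j).
Proof. by rewrite xpowE -wt_xmon; apply: order_ge_monoS. Qed.

Lemma order_ge_ydeg_wt (N : nat) f : order_ge ydeg N f -> order_ge (wt a b) (a * N)%N f.
Proof.
move=> ord_f mu /ord_f; rewrite !lez_nat /wt => le_N.
by rewrite (leq_trans _ (leq_addl _ _)) // leq_mul2l le_N orbT.
Qed.

Lemma g_supp_x0 mu : g mu != 0 -> mu ord0 = 0%N.
Proof. by apply: contraNeq; rewrite -lt0n => /g_noX->. Qed.

Lemma order_ge_Fxg : order_ge (wt a b) (a * b)%N Fxg.
Proof.
apply: order_geD; first by rewrite mulnC; apply: order_ge_xpow.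
apply: order_geN => mu g_mu; have := inQ_order_ge g_Qb g_mu.
by rewrite !lez_nat /wt g_supp_x0 // muln0 add0n leq_mul2l => ->; rewrite orbT.
Qed.

Lemma Fxg_lex_lead_ydeg (b_gt0 : (0 < b)%N) (g_nQb1 : ~ inIdeal (Q b.+1) g) :
  exists2 rho, lex_lead (wt a b) (ord0 :: enum 'I_m.+1) Fxg rho & (0 < ydeg rho)%N.
Proof.
have [rho [g_rho ydeg_rho]] : exists rho, g rho != 0 /\ ydeg rho = b.
  apply: contrapT => no_rho; apply/g_nQb1/order_ge_inQ => mu g_mu.
  have := inQ_order_ge g_Qb g_mu; rewrite !lez_nat leq_eqVlt => /predU1P[ydeg_mu|//].
  by case: no_rho; exists mu.
have x_rho := g_supp_x0 g_rho.
have F_rho : Fxg rho != 0.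
  rewrite /Fxg ser_coefB xpowE /monoS.
  have -> : (rho == xmon a) = false.
    by apply/negbTE/eqP => rho_x; move: x_rho; rewrite rho_x xmon_ord0; lia.
  by rewrite sub0r oppr_eq0.
have [r0 lead_r0] := ex_lex_lead (wt a b) (ord0 :: enum 'I_m.+1) (ex_intro _ rho F_rho).
exists r0 => //; case: lead_r0 => F_r0 ord_F r0_min.
have wt_rho : wt a b rho = (a * b)%N by rewrite /wt x_rho ydeg_rho muln0.
have wt_r0 : wt a b r0 = (a * b)%N.
  apply/eqP; rewrite eqn_leq -!lez_nat; apply/andP; split; last exact: order_ge_Fxg.
  by rewrite -wt_rho; apply: ord_F.
have := mon_lex_head (r0_min _ (etrans wt_rho (esym wt_r0)) F_rho).
rewrite x_rho leqn0 => /eqP x_r0.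
by move: wt_r0; rewrite /wt x_r0 muln0 add0n; nia.
Qed.

Lemma inIntClA_xpow k n : (n <= nk a b k)%N -> inIntClA Fxg (Q n) (x ^+ k).
Proof.
move=> n_le_nk.
pose cs := rcons (nseq a.-1 0) (- g ^+ k).
have cs_nth i : (i < a)%N -> cs`_i = if i == a.-1 then - g ^+ k else 0.
  by move=> lt_ia; rewrite nth_rcons size_nseq nth_nseq; case: ltngtP => //; lia.
apply/inIntClAP; exists a, cs, (\sum_(i < k) (x ^+ a) ^+ (k.-1 - i) * g ^+ i); split=> //.
- by rewrite size_rcons size_nseq; lia.
- move=> i lt_ia; rewrite cs_nth //; case: eqP => [->|_]; last exact: inIdeal0.
  apply/inIdealA_ideal/order_ge_inQpow/order_geN; rewrite prednK //.
  have := order_geX ydegD (j := k) (inQ_order_ge g_Qb); apply: order_geW.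
  by rewrite -PoszM lez_nat -leq_divRL // mulnC.
rewrite (bigD1_seq a.-1) ?mem_index_iota ?iota_uniq //=; last by lia.
rewrite big1_seq => [|i /andP[/negPf i_neq]]; last first.
  by rewrite mem_index_iota => /andP[_ /cs_nth->]; rewrite i_neq mul0r.
rewrite cs_nth ?eqxx; last by lia.
by rewrite prednK // subnn expr0 mulr1 addr0 -exprM mulnC exprM subrXX mulrC.
Qed.

Lemma integral_tail_order (n k d : nat) (cs : seq ser) : (k * b < n * a)%N ->
  (forall i, (i < d)%N -> inIdealA Fxg (powgens (Q n) i.+1) cs`_i) ->
  exists V, order_ge (wt a b) (b * (k * d)).+1
    (\sum_(0 <= i < d) cs`_i * x ^+ (k * (d - i.+1)) - V * Fxg).
Proof.
move=> kb_lt cs_Q; rewrite big_seq.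
elim/big_rec: _ => [|i z]; first by exists 0; rewrite mul0r subr0; apply: order_ge0.
rewrite mem_index_iota => /andP[_ lt_id] [V ord_z].
have /inIdealAP[u [v [Qu ->]]] := cs_Q i lt_id.
set j := (k * (d - i.+1))%N; exists (v * x ^+ j + V).
have -> : (u + v * Fxg) * x ^+ j + z - (v * x ^+ j + V) * Fxg = u * x ^+ j + (z - V * Fxg).
  by ring.
apply: order_geD ord_z.
have := order_geM wtD (order_ge_ydeg_wt (inQpow_order_ge Qu)) (order_ge_xpow (j := j)).
apply: order_geW; rewrite -PoszD lez_nat /j.
have {2}-> : d = (i.+1 + (d - i.+1))%N by lia.
by nia.
Qed.

Lemma inIntClA_xpow_le (b_gt0 : (0 < b)%N) (g_nQb1 : ~ inIdeal (Q b.+1) g) k n :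
  inIntClA Fxg (Q n) (x ^+ k) -> (n <= nk a b k)%N.
Proof.
move=> /inIntClAP[d [cs [h [d_gt0 _ cs_Q eq_int]]]].
rewrite leqNgt /nk ltn_divLR; last by lia.
apply/negP => kb_lt; have [V ord_tail] := integral_tail_order kb_lt cs_Q.
set tail := \sum_(0 <= i < d) _ in ord_tail.
pose W := (b * (k * d))%N; pose E := x ^+ (k * d) + (tail - V * Fxg).
have E_eq : E = (h - V) * Fxg.
  rewrite /E /tail mulrBl -eq_int exprM addrA; congr (_ + _ - _).
  by apply: eq_bigr => i _; rewrite exprM.
have E_low mu : (wt a b mu <= W)%N -> E mu = monoS K (xmon (k * d)) mu.
  move=> wt_mu; rewrite /E ser_coefD xpowE -[RHS]addr0; congr (_ + _); apply/eqP.
  by apply: contraTT wt_mu => /ord_tail; rewrite lez_nat -ltnNge.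
have E_x : E (xmon (k * d)) != 0 by rewrite E_low ?wt_xmon // /monoS eqxx oner_eq0.
have [r0 lead_r0 ydeg_r0] := Fxg_lex_lead_ydeg b_gt0 g_nQb1.
have hV_neq0 : exists mu, (h - V) mu != 0.
  apply: contrapT => hV0; move: E_x; rewrite E_eq.
  suff -> : h - V = 0 by rewrite mul0r ser_coef0 eqxx.
  by apply: funext => mu; have [//|hV_mu] := eqVneq ((h - V) mu) 0; case: hV0; exists mu.
have s_full i : i \in ord0 :: enum 'I_m.+1 by rewrite in_cons mem_enum orbT.
have [lam []] := mul_lex_lead wtD s_full hV_neq0 lead_r0.
rewrite -E_eq => E_lam /(_ _ E_x); rewrite wt_xmon lez_nat => /E_low E_eq_x.
move: E_lam; rewrite E_eq_x /monoS.
case: (mon_add lam r0 =P xmon (k * d)) => [lam_r0 _|_]; last by rewrite eqxx.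
by move: ydeg_r0; have := ydeg_xmon (k * d); rewrite -lam_r0 ydegD; lia.
Qed.

End PartA.

(** * The determinant trick *)

Lemma horner_char_poly (R : comNzRingType) n (B : 'M[R]_n) (r : R) :
  (char_poly B).[r] = \det (r%:M - B).
Proof.
rewrite /char_poly -horner_evalE -det_map_mx; congr (\det _); apply/matrixP => i j.
by rewrite !mxE /= /horner_eval hornerD hornerN hornerMn hornerX hornerC.
Qed.

Lemma horner_monic_rev (R : comNzRingType) (p : {poly R}) d r :
  p \is monic -> size p = d.+1 ->
  p.[r] = r ^+ d + \sum_(0 <= i < d) p`_(d - i.+1) * r ^+ (d - i.+1).
Proof.
move=> /monicP lead_p size_p; rewrite horner_coef size_p big_ord_recr /= addrC.
have -> : p`_d = 1 by rewrite -lead_p lead_coefE size_p.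
rewrite mul1r; congr (_ + _).
by rewrite big_mkord (reindex_inj rev_ord_inj).
Qed.

Section CharPolyOrder.
Variables (K : fieldType) (m : nat) (delta : mon m -> nat).
Hypothesis deltaD : {morph delta : u v / mon_add u v >-> (u + v)%N}.
Variable c : int.
Local Notation ser := (ser K m).

Definition poly_order_ge (L : int) (p : {poly ser}) :=
  forall k : nat, order_ge delta (L - k%:Z * c) p`_k.

Lemma poly_order_geD L p q : poly_order_ge L p -> poly_order_ge L q -> poly_order_ge L (p + q).
Proof. by move=> ord_p ord_q k; rewrite coefD; apply: order_geD. Qed.

Lemma poly_order_geN L p : poly_order_ge L p -> poly_order_ge L (- p).
Proof. by move=> ord_p k; rewrite coefN; apply: order_geN. Qed.

Lemma poly_order_geM L1 L2 p q :
  poly_order_ge L1 p -> poly_order_ge L2 q -> poly_order_ge (L1 + L2) (p * q).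
Proof.
move=> ord_p ord_q k; rewrite coefM; apply: order_ge_sum => j _.
have := order_geM deltaD (ord_p j) (ord_q (k - j)%N); apply: order_geW.
have le_jk : (j <= k)%N by rewrite -ltnS.
by rewrite -subzn // le_eqVlt; apply/orP; left; apply/eqP; ring.
Qed.

Lemma poly_order_ge_prod (I : Type) (r : seq I) (F : I -> {poly ser}) (L : I -> int) :
  (forall i, poly_order_ge (L i) (F i)) ->
  poly_order_ge (\sum_(i <- r) L i) (\prod_(i <- r) F i).
Proof.
move=> ord_F; elim: r => [|i r IHr]; last by rewrite !big_cons; apply: poly_order_geM.
rewrite !big_nil => k; rewrite coef1; case: eqP => [->|_]; last exact: order_ge0.
by apply: order_ge_nonpos; rewrite mul0r subr0.
Qed.

Variables (n : nat) (B : 'M[ser]_n) (s : 'I_n -> int).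
Hypothesis B_order : forall i j, order_ge delta (c + s i - s j) (B i j).

Lemma poly_order_ge_char_poly_mx i j : poly_order_ge (c + s i - s j) (char_poly_mx B i j).
Proof.
move=> k; rewrite !mxE coefB coefMn coefX coefC; apply: order_geD; last apply: order_geN.
  case: (i =P j) => [<-|_]; last by rewrite mulr0n; apply: order_ge0.
  case: (k =P 1%N) => [->|_]; last by rewrite mul0rn; apply: order_ge0.
  by apply: order_ge_nonpos; rewrite addrK mul1r subrr.
by case: (k =P 0%N) => [->|_]; [rewrite mul0r subr0 | apply: order_ge0].
Qed.

(* Each term of the Leibniz expansion of [det (X - B)], with [X] of weight [c], has
   order at least [sum_i (c + s i - s (sigma i)) = n c]: the [s] cancel. *)
Lemma order_ge_char_poly_coef (k : nat) :
  order_ge delta (n%:Z * c - k%:Z * c) (char_poly B)`_k.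
Proof.
have row_sum (sigma : 'S_n) : \sum_(i < n) (c + s i - s (sigma i)) = n%:Z * c.
  rewrite big_split sumrN big_split /= sumr_const card_ord -mulr_natl natz.
  have -> : \sum_(i < n) s (sigma i) = \sum_(i < n) s i.
    by rewrite [RHS](reindex_inj (@perm_inj _ sigma)).
  by rewrite addrK.
move: k; rewrite /char_poly /determinant.
apply: (big_ind (poly_order_ge _)) => [k|p q|sigma _]; first by rewrite coef0; apply: order_ge0.
  exact: poly_order_geD.
rewrite -(row_sum sigma).
have := poly_order_ge_prod (r := index_enum 'I_n)
  (fun i => poly_order_ge_char_poly_mx (i := i) (j := sigma i)).
by case: (odd_perm sigma); rewrite ?expr1 ?expr0 ?mulN1r ?mul1r //; apply: poly_order_geN.
Qed.

End CharPolyOrder.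

Lemma sum_ord_delta (R : pzSemiRingType) (n k : nat) (G : nat -> R) :
  \sum_(u < n) ((k == u) : nat)%:R * G u = ((k < n) : nat)%:R * G k.
Proof.
have [lt_kn|le_nk] := ltnP k n.
  rewrite (bigD1 (Ordinal lt_kn)) //= eqxx mul1r big1 ?addr0 ?mul1r // => u u_neq.
  by rewrite (_ : k == u = false) ?mul0r //; apply: contraNF u_neq => /eqP k_u; apply/eqP/val_inj.
rewrite mul0r big1 // => u _; rewrite (_ : k == u = false) ?mul0r //.
by apply/negbTE; have := ltn_ord u; lia.
Qed.

Section PartB.
Variables (K : fieldType) (m a b : nat) (g : ser K m).
Hypothesis a_gt0 : (0 < a)%N.
Hypothesis g_Qb : inIdeal (powgens (ysS K m) b) g.
Local Notation mon := (mon m).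
Local Notation ser := (ser K m).
Local Notation x := (xS K m).
Local Notation Q n := (powgens (ysS K m) n).
Local Notation Fxg := (Fxg a g).
Implicit Types (f h u : ser).

Lemma inIdealA_Q_J n f : inIdealA Fxg (Q n) f -> inIdealA Fxg (Jgens K m a b n) f.
Proof.
apply: inIdeal_trans => q; rewrite !mem_rcons !in_cons => /predU1P[->|Qq]; apply: inIdeal_mem.
  by rewrite mem_rcons mem_head.
by rewrite mem_rcons in_cons mem_cat Qq orbT.
Qed.

Definition Jform n u := exists P : nat -> ser,
  u = \sum_(i < a) x ^+ i * P i /\ forall i, (i < a)%N -> order_ge ydeg (n - nk a b i)%N (P i).

Lemma Jform_single n (j : nat) q : (j < a)%N -> order_ge ydeg (n - nk a b j)%N q ->
  Jform n (x ^+ j * q).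
Proof.
move=> lt_ja ord_q; exists (fun i => ((j == i) : nat)%:R * q); split.
  rewrite (eq_bigr (fun i : 'I_a => ((j == i) : nat)%:R * (x ^+ i * q))).
    by rewrite (sum_ord_delta _ _ (fun i => x ^+ i * q)) lt_ja mul1r.
  by move=> i _; rewrite mulrCA.
by move=> i _; case: (j =P i) => [<-|_]; [rewrite mul1r | rewrite mul0r; apply: order_ge0].
Qed.

Lemma inJ_Jform n u : inIdeal (Jgens K m a b n) u -> Jform n u.
Proof.
apply: inIdeal_ind => [|f1 f2 [P1 [-> ord_P1]] [P2 [-> ord_P2]]|h f1 [P1 [-> ord_P1]]|q].
- exists (fun _ => 0); split=> [|i _]; last exact: order_ge0.
  by rewrite big1 // => i _; rewrite mulr0.
- exists (fun i => P1 i + P2 i); split=> [|i lt_ia]; last by apply: order_geD; auto.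
  by rewrite -big_split; apply: eq_bigr => i _; rewrite mulrDr.
- exists (fun i => h * P1 i); split=> [|i lt_ia].
    by rewrite mulr_sumr; apply: eq_bigr => i _; rewrite mulrCA.
  rewrite -[X in order_ge _ X]add0r.
  by apply: order_geM; [exact: ydegD | exact: order_ge_nonpos | exact: ord_P1].
rewrite mem_cat => /orP[Qq|/flatten_mapP[i]].
  rewrite -[q]mul1r -[1](expr0 x); apply: Jform_single; first by lia.
  by rewrite /nk mul0n div0n subn0; apply: order_ge_Q.
rewrite mem_iota => /andP[i_gt0 lt_ia] /mapP[q' Qq' ->].
by rewrite mulSE expSE; apply: Jform_single; [lia | apply: order_ge_Q].
Qed.

Section MultiplicationMatrix.
Variables (n : nat) (P : nat -> ser) (h f : ser).
Hypothesis P_order : forall i, (i < a)%N -> order_ge ydeg (n - nk a b i)%N (P i).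
Hypothesis f_eq : f = \sum_(i < a) x ^+ i * P i + h * Fxg.

(* Row [l] expresses [x^l f] modulo [x^a - g] in the basis [1, x, ..., x^(a-1)]:
   the term [x^(i+l) P_i] is kept when [i + l < a] and becomes [x^(i+l-a) g P_i] otherwise. *)
Definition mulx_mx : 'M[ser]_a := \matrix_(l, u) \sum_(i < a)
  ((((i + l)%N == u) : nat)%:R * P i + (((i + l)%N == (u + a)%N) : nat)%:R * (g * P i)).

Definition xpow_col : 'cV[ser]_a := \col_l x ^+ l.

Definition mulx_rem : 'cV[ser]_a := \col_l (h * x ^+ l +
  \sum_(i < a) (((a <= i + l)%N : nat)%:R * (x ^+ (i + l - a) * P i))).

Lemma mulx_mx_row (l : 'I_a) : \sum_(u < a) mulx_mx l u * x ^+ u =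
  \sum_(i < a) (((i + l < a)%N : nat)%:R * (P i * x ^+ (i + l)) +
                ((a <= i + l)%N : nat)%:R * (g * P i * x ^+ (i + l - a))).
Proof.
under eq_bigr => u _ do rewrite mxE mulr_suml.
rewrite exchange_big; apply: eq_bigr => i _.
under eq_bigr => u _ do rewrite mulrDl -!mulrA.
rewrite big_split /= (@sum_ord_delta ser a (i + l) (fun u : nat => P i * x ^+ u)) -mulrA.
congr (_ + _).
have [le_a_il|lt_il_a] := leqP a (i + l).
  rewrite (eq_bigr (fun u : 'I_a => (((i + l - a)%N == u) : nat)%:R * (g * (P i * x ^+ u)))).
    rewrite (@sum_ord_delta ser a (i + l - a) (fun u : nat => g * (P i * x ^+ u))).
    by rewrite (_ : (i + l - a < a)%N) //; have := ltn_ord i; have := ltn_ord l; lia.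
  by move=> u _; have -> : (i + l == u + a)%N = (i + l - a == u)%N by apply/eqP/eqP; lia.
rewrite mul0r big1 // => u _; rewrite (_ : (i + l == u + a)%N = false) ?mul0r //.
by apply/negbTE/eqP; lia.
Qed.

Lemma mulx_mx_eq : (f%:M - mulx_mx) *m xpow_col = Fxg *: mulx_rem.
Proof.
rewrite mulmxBl mul_scalar_mx; apply/matrixP => l j; rewrite (ord1 j) !mxE.
under eq_bigr => u _ do rewrite [xpow_col u 0]mxE.
rewrite mulx_mx_row f_eq mulrDl mulr_suml [in RHS]mulrDr mulr_sumr.
rewrite addrAC -sumrB [in RHS]addrC; congr (_ + _); last by ring.
apply: eq_bigr => i _; have [le_a_il|lt_il_a] := leqP a (i + l).
  rewrite /= mulr0n mulr1n mul0r add0r !mul1r.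
  have -> : x ^+ i * P i * x ^+ l = P i * x ^+ (i + l - a) * x ^+ a.
    by rewrite -[in RHS]mulrA -exprD subnK // exprD; ring.
  by rewrite /Fxg; ring.
by rewrite /= mulr0n mulr1n mul0r addr0 !mul1r mul0r mulr0 exprD; ring.
Qed.

(* Cramer's rule: [det (f - M)] annihilates the column [xpow_col], whose first entry is [1]. *)
Lemma det_mulx_mx : exists c, \det (f%:M - mulx_mx) = c * Fxg.
Proof.
pose A := f%:M - mulx_mx.
have detA : (\det A)%:M *m xpow_col = Fxg *: (\adj A *m mulx_rem).
  by rewrite -mul_adj_mx -mulmxA mulx_mx_eq scalemxAr.
exists ((\adj A *m mulx_rem) (Ordinal a_gt0) 0).
have := congr1 (fun B : 'cV[ser]_a => B (Ordinal a_gt0) 0) detA.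
by rewrite mul_scalar_mx !mxE /= expr0 mulr1 mulrC.
Qed.

Lemma char_poly_mulx_coef j : (j < a)%N ->
  inIdeal (powgens (Q n) j.+1) (char_poly mulx_mx)`_(a - j.+1).
Proof.
move=> lt_ja; apply: order_ge_inQpow.
pose delta (mu : mon) := (a * ydeg mu)%N.
have deltaD : {morph delta : u v / mon_add u v >-> (u + v)%N}.
  by move=> u v; rewrite /delta ydegD mulnDr.
have M_order (l u : 'I_a) :
    order_ge delta ((a * n)%N%:Z + (l * b)%N%:Z - (u * b)%N%:Z) (mulx_mx l u).
  rewrite mxE; apply: order_ge_sum => i _.
  have le_nk : (nk a b i * a <= i * b)%N by rewrite /nk leq_divM.
  have ord_P : order_ge delta (a * (n - nk a b i))%N (P i).
    by move=> mu /(P_order (ltn_ord i)); rewrite !lez_nat leq_mul2l orbC => ->.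
  have ord_gP : order_ge delta (a * b + a * (n - nk a b i))%N (g * P i).
    rewrite PoszD; apply: order_geM; [exact: deltaD | | exact: ord_P].
    by move=> mu /(inQ_order_ge g_Qb); rewrite !lez_nat leq_mul2l orbC => ->.
  apply: order_geD.
    case: (i + l =P u)%N => [eq_u|_]; last by rewrite mul0r; apply: order_ge0.
    by rewrite mul1r; apply: order_geW ord_P; have := ltn_ord u; nia.
  case: (i + l =P u + a)%N => [eq_u|_]; last by rewrite mul0r; apply: order_ge0.
  by rewrite mul1r; apply: order_geW ord_gP; have := ltn_ord l; nia.
have := order_ge_char_poly_coef deltaD (s := fun i : 'I_a => (i * b)%N%:Z) M_order
  (k := (a - j.+1)%N).
move=> ord_coef mu /ord_coef; rewrite /delta; nia.
Qed.

End MultiplicationMatrix.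

Lemma inIntClA_J n f : inIdealA Fxg (Jgens K m a b n) f -> inIntClA Fxg (Q n) f.
Proof.
move=> /inIdealAP[u [h [/inJ_Jform[P [-> P_order]] f_eq]]].
have [c det_eq] := det_mulx_mx f_eq.
pose p := char_poly (mulx_mx P).
apply/inIntClAP; exists a, [seq p`_(a - i.+1) | i <- iota 0 a], c; split.
- by lia.
- by rewrite size_map size_iota.
- move=> j lt_ja; rewrite (nth_map 0%N) ?size_iota // nth_iota //.
  exact/inIdealA_ideal/char_poly_mulx_coef.
rewrite -det_eq -horner_char_poly (horner_monic_rev _ (char_poly_monic _) (size_char_poly _)).
congr (_ + _); rewrite big_seq_cond [RHS]big_seq_cond; apply: eq_bigr => i.
by rewrite andbT mem_index_iota => /andP[_ lt_ia]; rewrite (nth_map 0%N) ?size_iota // nth_iota.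
Qed.

End PartB.

Unset Implicit Arguments.

Theorem proposition5p2 (K : closedFieldType) (m a b : nat) (g : ser K m)
  (hm : (1 <= m)%N) (ha : (2 <= a)%N) (hab : (a <= b)%N)
  (g_y : forall mu : mon m, (0 < mu ord0)%N -> g mu = 0)
  (g_b : inIdeal (powgens (ysS K m) b) g)
  (g_nb : ~ inIdeal (powgens (ysS K m) b.+1) g) :
  let F := subS (expS (xS K m) a) g in
  (forall k n : nat, (1 <= k)%N -> (1 <= n)%N ->
     (inIntClA F (powgens (ysS K m) n) (expS (xS K m) k) <-> (n <= nk a b k)%N)) /\
  (forall n : nat, (1 <= n)%N ->
     (forall f, inIdealA F (powgens (ysS K m) n) f -> inIdealA F (Jgens K m a b n) f) /\
     (forall f, inIdealA F (Jgens K m a b n) f -> inIntClA F (powgens (ysS K m) n) f)).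
Proof.
have a_gt0 : (0 < a)%N := ltnW ha.
have b_gt0 : (0 < b)%N := leq_trans a_gt0 hab.
rewrite /= subSE expSE -/(Fxg a g); split=> [k n _ _|n _].
  by rewrite expSE; split; [apply: inIntClA_xpow_le | apply: inIntClA_xpow].
by split=> f; [apply: inIdealA_Q_J | apply: inIntClA_J].
Qed.
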